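(* Algorithm $\mathsf{LA}$ is deterministic and uses $O(n)$ queries to $f$. On every instance $(f,V,B)$ it returns a set $S$ with $c(S)\le B$ and $$\mathrm{opt}\le 19\,f(S),$$ where $\mathrm{opt}=\max\{f(T):T\subseteq V,\ c(T)\le B\}$.
   Context: Setting: $V$ is a finite ground set of size $n$. $f:2^V\to\mathbb{R}_{\ge 0}$ is a non-negative submodular set function with $f(\emptyset)=0$. Each $e\in V$ has a cost $c(e)>0$, and $c(S)=\sum_{e\in S}c(e)$. $B>0$ is a budget, and $c(e)\le B$ for every $e\in V$. A query is one evaluation of $f$ on a set. The notation $f(e\mid S)=f(S\cup\{e\})-f(S)$ is used. Algorithm $\mathsf{LA}$ on $(f,V,B)$ runs as follows. 1. Set $V_1=\{e\in V: c(e)\le B/2\}$ and $X=Y=\emptyset$. Let $e_{\max}\in\arg\max_{e\in V}f(e)$. 2. Main loop: process each $e\in V_1$ once, in an arbitrary fixed order. Among the sets $Z\in\{X,Y\}$ satisfying $f(e\mid Z)/c(e)\ge f(Z)/B$, choose one maximizing $f(e\mid Z)/c(e)$, breaking ties arbitrarily. If such a $Z$ exists, add $e$ to $Z$. 3. After the loop, for $T\in\{X,Y\}$ let $T(j)$ denote the set of the last $j$ elements added to $T$. Let $X'$ be the set $X(j)$ of largest cost among those with $0\le j\le|X|$ and $c(X(j))\le B$. Define $Y'$ from $Y$ in the same way. 4. Return the set $S$ among $X'$, $Y'$ and $\{e_{\max}\}$ with the largest $f$ value. *)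

From mathcomp Require Import all_boot all_order all_algebra.
Set Implicit Arguments. Unset Strict Implicit. Unset Printing Implicit Defensive.
Import Order.TTheory GRing.Theory Num.Theory.
Local Open Scope ring_scope.

Section Defs.
Variables (R : realFieldType) (T : finType).

Definition nonneg_fun (f : {set T} -> R) := forall S, 0 <= f S.
Definition submodular (f : {set T} -> R) :=
  forall A B : {set T}, f (A :|: B) + f (A :&: B) <= f A + f B.

Definition cost (c : T -> R) (S : {set T}) : R := \sum_(x in S) c x.

Definition marg (f : {set T} -> R) (e : T) (S : {set T}) := f (e |: S) - f S.

(* The algorithm accesses f ONLY through [query f], which
   increments the counter by one per evaluation of f. *)
Definition QM (A : Type) := nat -> A * nat.
Definition qret {A} (a : A) : QM A := fun k => (a, k).
Definition qbind {A B} (m : QM A) (g : A -> QM B) : QM B :=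
  fun k => let (a, k') := m k in g a k'.
Definition query (f : {set T} -> R) (S : {set T}) : QM R := fun k => (f S, k.+1).

Fixpoint qfoldl {A B} (g : B -> A -> QM B) (b : B) (s : seq A) : QM B :=
  match s with
  | [::] => qret b
  | a :: s' => qbind (g b a) (fun b' => qfoldl g b' s')
  end.

Definition setof (s : seq T) : {set T} := [set x in s].

(* ---------- Algorithm LA ----------
   Parameters besides the instance (f, c, B):
   - ord : the arbitrary fixed processing order (an enumeration of V);
   - tb X Y e : tie-breaking rule in the main loop (true = choose X) used when
     both X and Y qualify with equal density;
   - tbm e e' : tie-breaking rule for the argmax e_max (true = replace the current
     maximiser e' by e when f(e) = f(e')).
   Sets X, Y are stored as sequences in order of addition, together with the
   cached values f(X), f(Y). *)

Record LAstate := mkLA { Xs : seq T; fX : R; Ys : seq T; fY : R }.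

Definition LA_step (f : {set T} -> R) (c : T -> R) (B : R)
  (tb : {set T} -> {set T} -> T -> bool) (st : LAstate) (e : T) : QM LAstate :=
  let X := setof (Xs st) in let Y := setof (Ys st) in
  qbind (query f (e |: X)) (fun fXe =>
  qbind (query f (e |: Y)) (fun fYe =>
  let gX := (fXe - fX st) / c e in
  let gY := (fYe - fY st) / c e in
  let okX := fX st / B <= gX in
  let okY := fY st / B <= gY in
  let addX := mkLA (rcons (Xs st) e) fXe (Ys st) (fY st) in
  let addY := mkLA (Xs st) (fX st) (rcons (Ys st) e) fYe in
  qret (if okX && okY then
          (if gY < gX then addX else if gX < gY then addY
           else if tb X Y e then addX else addY)
        else if okX then addX else if okY then addY else st))).

Definition emax_step (f : {set T} -> R) (tbm : T -> T -> bool)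
  (best : option (T * R)) (e : T) : QM (option (T * R)) :=
  qbind (query f [set e]) (fun fe =>
  qret (match best with
        | None => Some (e, fe)
        | Some (e', fe') =>
            if (fe' < fe) || ((fe == fe') && tbm e e') then Some (e, fe) else best
        end)).

Definition lastj (s : seq T) (j : nat) : {set T} := setof (drop (size s - j) s).

Definition trunc (c : T -> R) (B : R) (s : seq T) : {set T} :=
  (foldl (fun (acc : {set T}) j =>
            let S := lastj s j in
            if (cost c S <= B) && (cost c acc < cost c S) then S else acc)
         set0 (iota 0 (size s).+1)).

Definition LA (f : {set T} -> R) (c : T -> R) (B : R) (ord : seq T)
  (tb : {set T} -> {set T} -> T -> bool) (tbm : T -> T -> bool) : QM {set T} :=
  let V1 := [seq e <- ord | c e <= B / 2] in
  qbind (qfoldl (emax_step f tbm) None ord) (fun em =>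
  qbind (query f set0) (fun f0 =>
  qbind (qfoldl (LA_step f c B tb) (mkLA [::] f0 [::] f0) V1) (fun st =>
  let X' := trunc c B (Xs st) in
  let Y' := trunc c B (Ys st) in
  qbind (query f X') (fun fX' =>
  qbind (query f Y') (fun fY' =>
  let SXY := if fX' < fY' then Y' else X' in
  let fXY := if fX' < fY' then fY' else fX' in
  qret (match em with
        | None => SXY
        | Some (e, fe) => if fXY < fe then [set e] else SXY
        end)))))).

Definition LA_output f c B ord tb tbm : {set T} := (LA f c B ord tb tbm 0).1.
Definition LA_queries f c B ord tb tbm : nat := (LA f c B ord tb tbm 0).2.

End Defs.

From mathcomp Require Import all_boot all_order all_algebra.
From mathcomp Require Import lra zify.
Import Order.TTheory GRing.Theory Num.Theory.
Local Open Scope ring_scope.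
Set Implicit Arguments. Unset Strict Implicit. Unset Printing Implicit Defensive.

(* LA grows two disjoint "dense chains" X and Y: an element e joins a chain Z
   only if f(e|Z)/c(e) >= f(Z)/B.  Summed over O, this gives
     f(X u O) <= (1 + c_small(O)/B) f(X) + #large(O) f(S) + f(Y),
     and symmetrically for Y; with f(X), f(Y) <= 3 f(S) this yields 19.
   - Program: the query-counting program is evaluated to pure folds, which
     are analysed with the invariants above; the main theorem combines them. *)

Lemma foldl_inv (A : eqType) (S : Type) (step : S -> A -> S)
    (I : seq A -> S -> Prop) (P : pred A) :
  (forall p st a, I p st -> P a -> a \notin p -> I (rcons p a) (step st a)) ->
  forall s p st, uniq (p ++ s) -> all P s -> I p st -> I (p ++ s) (foldl step st s).
Proof.
move=> step_inv; elim=> [|a s IH] p st; first by rewrite cats0.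
move=> u /andP [Pa Ps] Ip /=; rewrite -cat_rcons; apply: IH => //.
  by rewrite cat_rcons.
apply: step_inv => //; move: u; rewrite -cat1s catA cat_uniq => /and3P [].
by rewrite cats1 rcons_uniq => /andP [].
Qed.

Lemma qfoldl_pure (A S : Type) (step : S -> A -> QM S) (n : nat) :
  (forall st a k, step st a k = ((step st a 0).1, (k + n)%N)) ->
  forall s st k,
    qfoldl step st s k = (foldl (fun st a => (step st a 0).1) st s, (k + n * size s)%N).
Proof.
move=> step_cost; elim=> [|a s IH] st k /=; first by rewrite /qret muln0 addn0.
by rewrite /qbind step_cost IH mulnS addnA.
Qed.

Section SeqAsSet.
Variables (R : realFieldType) (T : finType).
Implicit Types (s a b : seq T) (x : T).

Lemma setof_nil : setof [::] = set0 :> {set T}.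
Proof. by apply/setP => y; rewrite !inE. Qed.

Lemma setof_rcons s x : setof (rcons s x) = x |: setof s.
Proof. by apply/setP => y; rewrite !inE mem_rcons inE. Qed.

Lemma setof_cat a b : setof (a ++ b) = setof a :|: setof b.
Proof. by apply/setP => y; rewrite !inE mem_cat. Qed.

Lemma in_setof x s : (x \in setof s) = (x \in s).
Proof. by rewrite inE. Qed.

Lemma cost_setof (c : T -> R) s : uniq s -> cost c (setof s) = \sum_(x <- s) c x.
Proof. by move=> us; rewrite /cost big_uniq //; apply: eq_bigl => y; rewrite inE. Qed.

End SeqAsSet.

Section Submodular.
Variables (R : realFieldType) (T : finType) (f : {set T} -> R).
Hypotheses (f_nn : nonneg_fun f) (f_sub : submodular f).
Implicit Types (A C O : {set T}) (e : T).

Lemma marg_antitone A C e : A \subset C -> e \notin C -> marg f e C <= marg f e A.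
Proof.
move=> sAC eC; rewrite /marg.
have := f_sub (e |: A) C.
have -> : e |: A :|: C = e |: C by rewrite -setUA (setUidPr sAC).
have -> : (e |: A) :&: C = A.
  apply/setP => y; rewrite !inE; case: (y =P e) => [->|_] /=.
  - by rewrite (negbTE eC) (contraNF (subsetP sAC e)).
  - by case yA: (y \in A) => //=; rewrite (subsetP sAC y yA).
by move=> h; rewrite lerBlDr; lra.
Qed.

Lemma marg_le_singleton A e (f0 : f set0 = 0) : e \notin A -> marg f e A <= f [set e].
Proof.
move=> eA; have := marg_antitone (sub0set A) eA.
by rewrite /marg setU0 f0 subr0.
Qed.

Lemma subadditive A C : f (A :|: C) <= f A + f C.
Proof. have := f_sub A C; have := f_nn (A :&: C); lra. Qed.

(* Two disjoint sets cannot both hide the value of O: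
   f(O) <= f(A u O) + f(C u O), since (A u O) n (C u O) = O. *)
Lemma disjoint_union_bound A C O :
  [disjoint A & C] -> f O <= f (A :|: O) + f (C :|: O).
Proof.
move=> dAC; have := f_sub (A :|: O) (C :|: O).
rewrite -setUIl (disjoint_setI0 dAC) set0U.
by have := f_nn (A :|: O :|: (C :|: O)); lra.
Qed.

Lemma union_marg_bound A O :
  f (A :|: O) <= f A + \sum_(o in O :\: A) marg f o A.
Proof.
move: {2}#|O| (leqnn #|O|) => n; elim: n O => [|n IH] O hO.
  by rewrite (cards0_eq (_ : #|O| = 0%N)) ?set0D ?big_set0 ?setU0 ?addr0 //; lia.
case: (set_0Vmem O) => [->|[o oO]]; first by rewrite set0D big_set0 setU0 addr0.
have hO' : (#|O :\ o| <= n)%N by move: hO; rewrite (cardsD1 o O) oO; lia.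
have eAO : A :|: O = o |: (A :|: O :\ o) by rewrite setUCA setD1K.
case oA: (o \in A).
  have -> : O :\: A = (O :\ o) :\: A.
    by apply/setP => y; rewrite !inE; case: (y =P o) => // ->; rewrite oA.
  by rewrite eAO (setUidPr _) ?sub1set ?inE ?oA //; apply: IH.
have -> : \sum_(o' in O :\: A) marg f o' A =
          marg f o A + \sum_(o' in (O :\ o) :\: A) marg f o' A.
  by rewrite (big_setD1 o) ?inE ?oA // setDDl setUC -setDDl.
have step : f (A :|: O) <= f (A :|: O :\ o) + marg f o A.
  rewrite eAO -[X in X <= _](subrK (f (A :|: O :\ o))) addrC lerD2l.
  apply: marg_antitone; first exact: subsetUl.
  by rewrite !inE oA eqxx.
by apply: le_trans step _; have := IH _ hO'; lra.
Qed.

End Submodular.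

Section DenseChains.
Variables (R : realFieldType) (T : finType).
Variables (f : {set T} -> R) (c : T -> R) (B : R).
Hypotheses (f_nn : nonneg_fun f) (f_sub : submodular f) (f0 : f set0 = 0)
  (c_pos : forall e, 0 < c e) (B_pos : 0 < B).
Implicit Types (s a b : seq T) (x e : T).

Definition dense s := forall a x b, s = a ++ x :: b ->
  f (setof a) / B <= marg f x (setof a) / c x.

Lemma dense_nil : dense [::].
Proof. by move=> [|??] ? ?. Qed.

Lemma dense_rcons s x : dense s -> f (setof s) / B <= marg f x (setof s) / c x ->
  dense (rcons s x).
Proof.
move=> ds hx a y b; case/lastP: b => [|b z].
  by rewrite cats1 => /rcons_inj [<- <-].
by rewrite -rcons_cons -rcons_cat => /rcons_inj [/ds].
Qed.

Lemma marg_ge0_of_test (S : {set T}) m x : f S / B <= m / c x -> 0 <= m.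
Proof.
move=> h; have h0 : 0 <= f S / B by rewrite divr_ge0 // ?f_nn // ltW.
have : 0 <= m / c x by apply: le_trans h.
by rewrite pmulr_lge0 // invr_gt0.
Qed.

Lemma dense_rconsE s x : dense (rcons s x) ->
  [/\ dense s, 0 <= marg f x (setof s) &
      f (setof s) / B <= marg f x (setof s) / c x].
Proof.
move=> d; have h : f (setof s) / B <= marg f x (setof s) / c x.
  by apply: (d s x [::]); rewrite cats1.
split=> //; last exact: marg_ge0_of_test h.
by move=> a y b E; apply: (d a y (rcons b x)); rewrite E rcons_cat rcons_cons.
Qed.

Lemma f_rcons s x : f (setof (rcons s x)) = f (setof s) + marg f x (setof s).
Proof. by rewrite setof_rcons /marg addrC subrK. Qed.

Lemma dense_mono a b : dense (a ++ b) -> f (setof a) <= f (setof (a ++ b)).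
Proof.
elim/last_ind: b => [|b x IH]; first by rewrite cats0.
rewrite -rcons_cat => /dense_rconsE [d h _].
by rewrite f_rcons; apply: le_trans (IH d) _; rewrite lerDl.
Qed.

(* The key chain inequality: the elements of a suffix b were each bought at
   density >= f(a)/B, so c(b) f(a) <= B f(b). *)
Lemma dense_chain_bound a b : dense (a ++ b) -> uniq (a ++ b) ->
  (\sum_(x <- b) c x) * f (setof a) <= B * f (setof b).
Proof.
elim/last_ind: b => [|b x IH]; first by rewrite big_nil mul0r setof_nil f0 mulr0.
rewrite -rcons_cat rcons_uniq => /dense_rconsE [d _ test] /andP [xab uab].
rewrite f_rcons -cats1 big_cat big_seq1 /= mulrDl mulrDr.
apply: lerD; first exact: IH.
have shrink : marg f x (setof (a ++ b)) <= marg f x (setof b).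
  apply: marg_antitone => //; first by rewrite setof_cat subsetUr.
  by rewrite in_setof; apply: contra xab; rewrite mem_cat orbC => ->.
have paid : c x * f (setof (a ++ b)) <= B * marg f x (setof (a ++ b)).
  move: test; rewrite ler_pdivrMr // mulrAC ler_pdivlMr //.
  by rewrite mulrC [B * _]mulrC.
have cx := c_pos x.
apply: le_trans (_ : c x * f (setof (a ++ b)) <= _).
  by rewrite ler_pM2l // dense_mono.
by apply: le_trans paid _; rewrite ler_pM2l.
Qed.

(* Cutting a dense chain where the suffix costs more than B/2 loses at most
   a factor 3: f(a ++ b) <= f(a) + f(b) <= 3 f(b). *)
Lemma dense_suffix_bound a b : dense (a ++ b) -> uniq (a ++ b) ->
  a = [::] \/ B / 2 < \sum_(x <- b) c x ->
  f (setof (a ++ b)) <= 3%:R * f (setof b).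
Proof.
move=> d u [-> | heavy]; first by have := f_nn (setof b); rewrite cat0s; lra.
have chain := dense_chain_bound d u.
have fa0 := f_nn (setof a); have fb0 := f_nn (setof b).
have half : B * (f (setof a) / 2) <= B * f (setof b).
  apply: le_trans chain; rewrite mulrCA mulrC ler_wpM2r //; lra.
rewrite setof_cat; apply: le_trans (subadditive f_nn f_sub _ _) _.
move: half; rewrite ler_pM2l //; lra.
Qed.

(* The gain of o in a chain: its marginal at the moment it was appended. *)
Definition chain_gain s o :=
  if o \in s then marg f o (setof (take (index o s) s)) else 0.

Lemma chain_gain_ge0 s o : dense s -> uniq s -> 0 <= chain_gain s o.
Proof.
rewrite /chain_gain; case: ifP => // /splitPr [p1 p2] d u.
have op1 : o \notin p1.
  by move: u; rewrite -cat1s catA cat_uniq cats1 rcons_uniq => /and3P [/andP []].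
by rewrite take_pivot //; apply: marg_ge0_of_test (d p1 o p2 erefl).
Qed.

Lemma sum_chain_gain s : uniq s -> \sum_(o : T) chain_gain s o = f (setof s).
Proof.
move=> u.
have -> : \sum_(o : T) chain_gain s o =
          \sum_(o <- s) marg f o (setof (take (index o s) s)).
  by rewrite [RHS]big_uniq // [RHS]big_mkcond; apply: eq_bigr => o _.
elim/last_ind: s u => [|s x IH]; first by rewrite big_nil setof_nil f0.
rewrite rcons_uniq => /andP [xs us].
rewrite -cats1 big_cat big_seq1 /= cats1 f_rcons -IH //; congr (_ + _).
  apply: eq_big_seq => o os; congr (marg f o (setof _)).
  by rewrite -cats1 index_cat os take_cat index_mem os.
by rewrite -cats1 index_cat (negbTE xs) /= eqxx addn0 take_cat ltnn subnn take0 cats0.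
Qed.

End DenseChains.

Section Truncation.
Variables (R : realFieldType) (T : finType).
Variables (f : {set T} -> R) (c : T -> R) (B : R).
Hypotheses (f_nn : nonneg_fun f) (f_sub : submodular f) (f0 : f set0 = 0)
  (c_pos : forall e, 0 < c e) (B_pos : 0 < B).
Implicit Types (xs : seq T).

Lemma trunc_spec xs :
  [/\ exists2 j, (j <= size xs)%N & trunc c B xs = lastj xs j,
      cost c (trunc c B xs) <= B &
      forall j, (j <= size xs)%N -> cost c (lastj xs j) <= B ->
        cost c (lastj xs j) <= cost c (trunc c B xs)].
Proof.
pose I (js : seq nat) (acc : {set T}) :=
  [/\ exists2 j, (j <= size xs)%N & acc = lastj xs j, cost c acc <= B &
      forall j, j \in js -> cost c (lastj xs j) <= B ->
        cost c (lastj xs j) <= cost c acc].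
suff [hjs hc hmax] : I (iota 0 (size xs).+1) (trunc c B xs).
  by split=> // j hj; apply: hmax; rewrite mem_iota add0n ltnS.
rewrite /trunc -[iota _ _]cat0s.
apply: (@foldl_inv _ _ _ I (fun j => (j <= size xs)%N)).
- move=> js acc a [[j hj ->] hc hmax] ha _ /=.
  case: ifP => [/andP [ca lt]|/negbT hn].
  + split=> //; first by exists a.
    move=> j'; rewrite mem_rcons inE => /orP [/eqP -> //|/hmax h /h h'].
    exact: le_trans h' (ltW lt).
  + split=> //; first by exists j.
    move=> j'; rewrite mem_rcons inE => /orP [/eqP -> ca|/hmax //].
    by move: hn; rewrite ca /= -leNgt.
- by rewrite cat0s iota_uniq.
- by apply/allP => j; rewrite mem_iota add0n ltnS.
- have l0 : lastj xs 0 = set0 by rewrite /lastj subn0 drop_size setof_nil.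
  split=> //; first by exists 0%N; rewrite ?l0.
  by rewrite /cost big_set0 ltW.
Qed.

Lemma trunc_bound xs : dense f c B xs -> uniq xs ->
  (forall x, x \in xs -> c x <= B / 2) ->
  cost c (trunc c B xs) <= B /\ f (setof xs) <= 3%:R * f (trunc c B xs).
Proof.
move=> d u small; case: (trunc_spec xs) => [[j hj ->] hc hmax]; split=> //.
rewrite /lastj; set i := (size xs - j)%N.
rewrite -{1}(cat_take_drop i xs); apply: (dense_suffix_bound (B := B)) => //;
  rewrite ?cat_take_drop //.
have [full|part] := leqP (size xs) j.
  by left; rewrite (_ : i = 0%N) ?take0 // /i; lia.
right; have ti : size (take i xs) = i by rewrite size_takel // leq_subr.
have [a [x ea]] : exists a x, take i xs = rcons a x.
  case/lastP: (take i xs) ti => [/= i0|a x _]; last by exists a, x.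
  by move: part i0; rewrite /i; lia.
have sa : size a = i.-1 by move: ti; rewrite ea size_rcons => <-.
have ext : drop i.-1 xs = x :: drop i xs.
  by rewrite -{1}(cat_take_drop i xs) ea cat_rcons drop_size_cat.
have ux : uniq (x :: drop i xs) by rewrite -ext drop_uniq.
have over : B < c x + \sum_(y <- drop i xs) c y.
  rewrite ltNge; apply/negP => h.
  have := hmax j.+1 part; rewrite /lastj (_ : (size xs - j.+1 = i.-1)%N); last first.
    by rewrite /i; lia.
  rewrite ext !cost_setof ?drop_uniq // big_cons => /(_ h).
  by have := c_pos x; lra.
have : c x <= B / 2.
  by apply/small; rewrite -(cat_take_drop i xs) ea mem_cat mem_rcons mem_head.
lra.
Qed.

End Truncation.

Section MainLoop.
Variables (R : realFieldType) (T : finType).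
Variables (f : {set T} -> R) (c : T -> R) (B : R).
Hypothesis c_pos : forall e, 0 < c e.
Variable tb : {set T} -> {set T} -> T -> bool.
Implicit Types (p xs ys : seq T) (e : T).

(* Certificate that e is not in the chain xs: for some prefix a of xs, either
   e failed the density test w.r.t. a, or e lies in the other chain ys where
   it was added with a gain at least its gain w.r.t. a. *)
Definition rejected xs ys e := exists a b, xs = a ++ b /\
  (marg f e (setof a) / c e < f (setof a) / B \/
   exists ya yb, ys = ya ++ e :: yb /\ marg f e (setof a) <= marg f e (setof ya)).

Record loop_inv p xs fx ys fy : Prop := LoopInv {
  inv_fX : fx = f (setof xs);
  inv_fY : fy = f (setof ys);
  inv_uniq : uniq (xs ++ ys);
  inv_sub : {subset xs ++ ys <= p};
  inv_denseX : dense f c B xs;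
  inv_denseY : dense f c B ys;
  inv_rejX : forall e, e \in p -> e \notin xs -> rejected xs ys e;
  inv_rejY : forall e, e \in p -> e \notin ys -> rejected ys xs e }.

Lemma rejected_rcons_l xs ys e x : rejected xs ys e -> rejected (rcons xs x) ys e.
Proof. by case=> a [b [-> h]]; exists a, (rcons b x); rewrite rcons_cat. Qed.

Lemma rejected_rcons_r xs ys e x : rejected xs ys e -> rejected xs (rcons ys x) e.
Proof.
case=> a [b [E [h|[ya [yb [E' h]]]]]]; exists a, b; split=> //; first by left.
by right; exists ya, (rcons yb x); rewrite E' rcons_cat rcons_cons.
Qed.

Lemma loop_inv_sym p xs fx ys fy : loop_inv p xs fx ys fy -> loop_inv p ys fy xs fx.
Proof.
case=> *; constructor=> //; first by rewrite uniq_catC.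
by move=> y; rewrite mem_cat orbC -mem_cat; auto.
Qed.

Lemma loop_inv_add p xs ys fy e : loop_inv p xs (f (setof xs)) ys fy -> e \notin p ->
  f (setof xs) / B <= marg f e (setof xs) / c e ->
  (f (setof ys) / B <= marg f e (setof ys) / c e ->
     marg f e (setof ys) / c e <= marg f e (setof xs) / c e) ->
  loop_inv (rcons p e) (rcons xs e) (f (e |: setof xs)) ys fy.
Proof.
case=> _ Hfy Hu Hs Hdx Hdy Hrx Hry ep okX cmp.
have exy : e \notin xs ++ ys by apply/negP => /Hs; rewrite (negbTE ep).
constructor=> //.
- by rewrite setof_rcons.
- rewrite -cats1 -catA (perm_uniq (permEl (perm_catCA xs [:: e] ys))) /=.
  by rewrite exy Hu.
- move=> y; rewrite cat_rcons mem_cat inE mem_rcons inE.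
  by case: (y =P e) => //= _; rewrite -mem_cat; apply: Hs.
- exact: dense_rcons.
- move=> y; rewrite !mem_rcons !inE; case: (y =P e) => //= _ yp yx.
  exact/rejected_rcons_l/Hrx.
- move=> y; rewrite mem_rcons inE; case: (y =P e) => [-> _ _|_ /= yp yy].
  + exists ys, [::]; rewrite cats0; split=> //.
    have [okY|nokY] := leP (f (setof ys) / B) (marg f e (setof ys) / c e).
    * right; exists xs, [::]; rewrite cats1; split=> //.
      by move: (cmp okY); rewrite ler_pM2r // invr_gt0.
    * by left.
  + exact/rejected_rcons_r/Hry.
Qed.

Lemma loop_inv_skip p xs fx ys fy e : loop_inv p xs fx ys fy -> e \notin p ->
  marg f e (setof xs) / c e < f (setof xs) / B ->
  marg f e (setof ys) / c e < f (setof ys) / B ->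
  loop_inv (rcons p e) xs fx ys fy.
Proof.
case=> Hfx Hfy Hu Hs Hdx Hdy Hrx Hry ep nX nY; constructor=> //.
- by move=> y /Hs; rewrite mem_rcons inE orbC => ->.
- move=> y; rewrite mem_rcons inE; case: (y =P e) => [-> _ _|_ /= yp yx].
  + by exists xs, [::]; rewrite cats0; split=> //; left.
  + exact: Hrx.
- move=> y; rewrite mem_rcons inE; case: (y =P e) => [-> _ _|_ /= yp yx].
  + by exists ys, [::]; rewrite cats0; split=> //; left.
  + exact: Hry.
Qed.

Lemma LA_step_inv p st e : loop_inv p (Xs st) (fX st) (Ys st) (fY st) -> e \notin p ->
  let st' := (LA_step f c B tb st e 0).1 in
  loop_inv (rcons p e) (Xs st') (fX st') (Ys st') (fY st').
Proof.
case: st => xs fx ys fy /= inv ep.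
move: (inv_fX inv) (inv_fY inv) => hfx hfy; subst fx fy.
rewrite /LA_step /qbind /query /qret /=.
set gX := (f (e |: setof xs) - f (setof xs)) / c e.
set gY := (f (e |: setof ys) - f (setof ys)) / c e.
have addX : f (setof xs) / B <= gX -> (f (setof ys) / B <= gY -> gY <= gX) ->
    loop_inv (rcons p e) (rcons xs e) (f (e |: setof xs)) ys (f (setof ys)).
  by move=> okX cmp; apply: loop_inv_add.
have addY : f (setof ys) / B <= gY -> (f (setof xs) / B <= gX -> gX <= gY) ->
    loop_inv (rcons p e) xs (f (setof xs)) (rcons ys e) (f (e |: setof ys)).
  by move=> okY cmp; apply/loop_inv_sym/loop_inv_add => //; apply: loop_inv_sym.
case okX: (f (setof xs) / B <= gX); case okY: (f (setof ys) / B <= gY) => /=.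
- case: ltgtP => [lt|lt|eq].
  + by apply: addX => // _; apply: ltW.
  + by apply: addY => // _; apply: ltW.
  + by case: (tb _ _ _); [apply: addX | apply: addY] => // _; rewrite eq.
- by apply: addX => //; rewrite okY.
- by apply: addY => //; rewrite okX.
- by apply: loop_inv_skip => //; rewrite ltNge ?okX ?okY.
Qed.

End MainLoop.

Section Approximation.
Variables (R : realFieldType) (T : finType).
Variables (f : {set T} -> R) (c : T -> R) (B : R).
Hypotheses (f_nn : nonneg_fun f) (f_sub : submodular f) (f0 : f set0 = 0)
  (c_pos : forall e, 0 < c e) (B_pos : 0 < B).
Implicit Types (p xs ys : seq T) (O : {set T}) (o : T).

(* Split of an element's contribution to a budget: its cost if it is small
   (cost <= B/2, hence processed by the main loop), and a unit count if large. *)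
Definition small_cost o := if c o <= B / 2 then c o else 0.
Definition large o : R := if c o <= B / 2 then 0 else 1.

Lemma small_cost_ge0 o : 0 <= small_cost o.
Proof. by rewrite /small_cost; case: ifP => // _; apply: ltW. Qed.

Lemma large_ge0 o : 0 <= large o.
Proof. by rewrite /large; case: ifP. Qed.

(* A feasible set has at most B of small cost, and each large element
   accounts for more than B/2. *)
Lemma budget_split O : cost c O <= B ->
  \sum_(o in O) small_cost o + (\sum_(o in O) large o) * (B / 2) <= B.
Proof.
move=> cO; apply: le_trans cO; rewrite /cost mulr_suml -big_split /=.
apply: ler_sum => o _; rewrite /small_cost /large; case: ifP => co.
  by rewrite mul0r addr0.
by rewrite mul1r add0r ltW // ltNge co.
Qed.

(* Marginal gain w.r.t. the chain X of an element o outside X: a small o was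
   rejected by X (it then pays at density f(X)/B) or went to Y with at least
   this gain; a large o gains at most its singleton value. *)
Lemma marg_outside_chain p xs fx ys fy fS o :
  loop_inv f c B p xs fx ys fy -> (forall x, c x <= B / 2 -> x \in p) ->
  (forall x, f [set x] <= fS) -> o \notin setof xs ->
  marg f o (setof xs) <=
    small_cost o / B * f (setof xs) + large o * fS + chain_gain f ys o.
Proof.
move=> inv processed singleton oX.
have uy : uniq ys by move: (inv_uniq inv); rewrite cat_uniq => /and3P [].
have g0 := chain_gain_ge0 f_nn c_pos B_pos o (inv_denseY inv) uy.
rewrite /small_cost /large; case: ifP => co; last first.
  by rewrite !mul0r add0r mul1r; have := marg_le_singleton f_sub f0 oX; have := singleton o; lra.
rewrite mul0r addr0.
have ox : o \notin xs by rewrite -in_setof.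
case: (inv_rejX inv (processed o co) ox) => a [b [E rej]].
have shrink : marg f o (setof xs) <= marg f o (setof a).
  by apply: marg_antitone oX => //; rewrite E setof_cat subsetUl.
case: rej => [failed|[ya [yb [E' better]]]].
- have grow : f (setof a) <= f (setof xs).
    by rewrite E; apply: (dense_mono f_nn c_pos B_pos); rewrite -E; apply: inv_denseX inv.
  have := c_pos o; move: failed; rewrite ltr_pdivrMr // => failed cp.
  have : f (setof a) / B * c o <= f (setof xs) / B * c o.
    by rewrite ler_pM2r // ler_pM2r // invr_gt0.
  lra.
- have oy : o \in ys by rewrite E' mem_cat mem_head orbT.
  have oya : o \notin ya.
    by move: uy; rewrite E' -cat1s catA cat_uniq cats1 rcons_uniq => /and3P [/andP []].
  have : chain_gain f ys o = marg f o (setof ya) by rewrite /chain_gain oy E' take_pivot.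
  have : 0 <= c o / B * f (setof xs) by rewrite mulr_ge0 // ?divr_ge0 // ltW.
  lra.
Qed.

Lemma union_chain_bound p xs fx ys fy fS O : 0 <= fS ->
  loop_inv f c B p xs fx ys fy -> (forall x, c x <= B / 2 -> x \in p) ->
  (forall x, f [set x] <= fS) ->
  f (setof xs :|: O) <= f (setof xs) + (\sum_(o in O) small_cost o) / B * f (setof xs)
      + (\sum_(o in O) large o) * fS + f (setof ys).
Proof.
move=> fS0 inv processed singleton; set X := setof xs.
have uy : uniq ys by move: (inv_uniq inv); rewrite cat_uniq => /and3P [].
have G0 o := chain_gain_ge0 f_nn c_pos B_pos o (inv_denseY inv) uy.
pose F o := small_cost o / B * f X + large o * fS + chain_gain f ys o.
have F0 o : 0 <= F o.
  have := G0 o.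
  have : 0 <= small_cost o / B * f X.
    by rewrite mulr_ge0 ?divr_ge0 ?small_cost_ge0 ?f_nn ?ltW.
  have : 0 <= large o * fS by rewrite mulr_ge0 ?large_ge0.
  rewrite /F; lra.
have outside : \sum_(o in O :\: X) marg f o X <= \sum_(o in O) F o.
  rewrite [leRHS](big_setID X) /= -[leLHS]add0r.
  apply: lerD; first exact: sumr_ge0.
  apply: ler_sum => o; rewrite inE => /andP [oX _].
  exact: marg_outside_chain inv processed singleton oX.
have gains : \sum_(o in O) chain_gain f ys o <= f (setof ys).
  rewrite -(sum_chain_gain f0 uy) [leRHS](bigID (mem O)) /= -[leLHS]addr0.
  by apply: lerD => //; apply: sumr_ge0.
apply: le_trans (union_marg_bound f_sub X O) _.
rewrite -!addrA lerD2l addrA; apply: le_trans outside _.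
by rewrite /F !big_split /= -!mulr_suml lerD2l.
Qed.

Lemma chains_bound p xs fx ys fy fS O : 0 <= fS ->
  loop_inv f c B p xs fx ys fy -> (forall x, c x <= B / 2 -> x \in p) ->
  (forall x, f [set x] <= fS) -> cost c O <= B ->
  f (setof xs) <= 3%:R * fS -> f (setof ys) <= 3%:R * fS -> f O <= 19%:R * fS.
Proof.
move=> fS0 inv processed singleton cO hX hY.
have bX := union_chain_bound O fS0 inv processed singleton.
have bY := union_chain_bound O fS0 (loop_inv_sym inv) processed singleton.
have disj : [disjoint setof xs & setof ys].
  rewrite -setI_eq0; apply/eqP/setP => z; rewrite !inE.
  move: (inv_uniq inv); rewrite cat_uniq => /and3P [_ /hasPn/(_ z) notX _].
  by case: (z \in ys) notX => [/(_ isT)/negbTE ->|]; rewrite ?andbF.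
have split := disjoint_union_bound f_nn f_sub O disj.
have budget := budget_split cO.
set K := \sum_(o in O) small_cost o in bX bY budget.
set M := \sum_(o in O) large o in bX bY budget.
have K0 : 0 <= K by apply: sumr_ge0 => o _; apply: small_cost_ge0.
have M0 : 0 <= M by apply: sumr_ge0 => o _; apply: large_ge0.
have kM : K / B + M / 2 <= 1.
  by rewrite -(ler_pM2r B_pos) mul1r mulrDl divfK ?gt_eqF // mulrAC -mulrA.
have fX0 := f_nn (setof xs); have fY0 := f_nn (setof ys).
have t1 : K / B * (f (setof xs) + f (setof ys)) <= K / B * (6%:R * fS).
  by apply: ler_wpM2l; [rewrite divr_ge0 // ltW | lra].
have t2 : (6%:R * (K / B) + 2%:R * M) * fS <= 6%:R * fS.
  by apply: ler_wpM2r => //; lra.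
move: split bX bY t1 t2; rewrite !mulrDr !mulrDl; lra.
Qed.

End Approximation.

Section Program.
Variables (R : realFieldType) (T : finType).
Variables (f : {set T} -> R) (c : T -> R) (B : R) (ord : seq T)
  (tb : {set T} -> {set T} -> T -> bool) (tbm : T -> T -> bool).

Definition small_elems := [seq e <- ord | c e <= B / 2].

Definition emax_scan := foldl (fun best e => (emax_step f tbm best e 0).1) None ord.

Definition main_loop := foldl (fun st e => (LA_step f c B tb st e 0).1)
  (mkLA [::] (f set0) [::] (f set0)) small_elems.

Definition best_of (X' Y' : {set T}) (em : option (T * R)) : {set T} :=
  let SXY := if f X' < f Y' then Y' else X' in
  let fXY := if f X' < f Y' then f Y' else f X' in
  match em with
  | None => SXY
  | Some (e, fe) => if fXY < fe then [set e] else SXY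
  end.

(* Running LA: one query per element for e_max, one for f(empty), two per
   small element in the main loop, and two for f(X'), f(Y'). *)
Lemma LA_eval :
  LA f c B ord tb tbm 0 =
  (best_of (trunc c B (Xs main_loop)) (trunc c B (Ys main_loop)) emax_scan,
   (size ord + 2 * size small_elems + 3)%N).
Proof.
have emax_cost b a k : emax_step f tbm b a k = ((emax_step f tbm b a 0).1, (k + 1)%N).
  by rewrite addn1.
have step_cost b a k : LA_step f c B tb b a k = ((LA_step f c B tb b a 0).1, (k + 2)%N).
  by rewrite addn2.
rewrite /LA /qbind /query /qret (qfoldl_pure emax_cost) /= (qfoldl_pure step_cost).
by rewrite /best_of /main_loop /emax_scan /small_elems; congr (_, _); lia.
Qed.

Lemma LA_queries_bound : (LA_queries f c B ord tb tbm <= 3 * size ord + 3)%N.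
Proof.
rewrite /LA_queries LA_eval /=.
have : (size small_elems <= size ord)%N by rewrite size_filter count_size.
lia.
Qed.

Lemma emax_scan_spec : uniq ord ->
  match emax_scan with
  | None => ord = [::]
  | Some (e, fe) => fe = f [set e] /\ forall x, x \in ord -> f [set x] <= fe
  end.
Proof.
move=> u; pose I (p : seq T) (best : option (T * R)) :=
  match best with
  | None => p = [::]
  | Some (e, fe) => fe = f [set e] /\ forall x, x \in p -> f [set x] <= fe
  end.
rewrite /emax_scan -[ord]cat0s.
apply: (@foldl_inv _ _ _ I predT) => //; last by apply/allP.
move=> p [[e fe]|] a /= Ip _ _; rewrite /I; last first.
  by rewrite Ip; split=> // x; rewrite inE => /eqP ->.
case: Ip => -> hp; case: ifP => [/orP better|/negbT].
- split=> // x; rewrite mem_rcons inE => /orP [/eqP -> //|/hp hx].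
  by apply: le_trans hx _; case: better => [/ltW //|/andP [/eqP -> _]].
- rewrite negb_or => /andP [worse _]; split=> // x.
  by rewrite mem_rcons inE => /orP [/eqP ->|/hp //]; rewrite leNgt.
Qed.

Lemma best_of_spec X' Y' em :
  cost c X' <= B -> cost c Y' <= B -> (forall e, c e <= B) ->
  (match em with
   | None => ord = [::]
   | Some (e, fe) => fe = f [set e] /\ forall x, x \in ord -> f [set x] <= fe
   end) ->
  let S := best_of X' Y' em in
  [/\ cost c S <= B, f X' <= f S, f Y' <= f S &
      forall x, x \in ord -> f [set x] <= f S].
Proof.
move=> cX cY cB hem /=; rewrite /best_of.
set SXY := if f X' < f Y' then Y' else X'.
have [cS mX mY] : [/\ cost c SXY <= B, f X' <= f SXY & f Y' <= f SXY].
  by rewrite /SXY; case: ltP => h; split=> //; apply: ltW.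
have -> : (if f X' < f Y' then f Y' else f X') = f SXY by rewrite /SXY; case: ifP.
case: em hem => [[e fe] [-> emax]|nil]; last by split=> // x; rewrite nil.
case: ifP => [/ltW better|/negbT]; last rewrite -leNgt => worse.
- by split; rewrite /cost ?big_set1 //; apply: le_trans better.
- by split=> // x /emax /le_trans; apply.
Qed.

End Program.

Section Analysis.
Variables (R : realFieldType) (T : finType).
Variables (f : {set T} -> R) (c : T -> R) (B : R) (ord : seq T)
  (tb : {set T} -> {set T} -> T -> bool) (tbm : T -> T -> bool).
Hypotheses (f_nn : nonneg_fun f) (f_sub : submodular f) (f0 : f set0 = 0)
  (c_pos : forall e, 0 < c e) (B_pos : 0 < B) (c_le_B : forall e, c e <= B)
  (ord_perm : perm_eq ord (enum T)).

Let V1 := small_elems c B ord.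
Let st := main_loop f c B ord tb.

Lemma ord_uniq : uniq ord.
Proof. by rewrite (perm_uniq ord_perm) enum_uniq. Qed.

Lemma mem_V1 x : (x \in V1) = (c x <= B / 2).
Proof. by rewrite mem_filter (perm_mem ord_perm) mem_enum andbT. Qed.

Lemma main_loop_inv : loop_inv f c B V1 (Xs st) (fX st) (Ys st) (fY st).
Proof.
rewrite /st /main_loop -/V1 -[V1]cat0s.
apply: (@foldl_inv _ _ _ (fun p st => loop_inv f c B p (Xs st) (fX st) (Ys st) (fY st)) predT).
- by move=> p s e inv _; apply: LA_step_inv.
- by rewrite cat0s filter_uniq // ord_uniq.
- exact/allP.
- by constructor=> //=; rewrite ?setof_nil //; apply: dense_nil.
Qed.

Lemma chain_trunc xs fx ys fy : loop_inv f c B V1 xs fx ys fy ->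
  cost c (trunc c B xs) <= B /\ f (setof xs) <= 3%:R * f (trunc c B xs).
Proof.
move=> inv; apply: trunc_bound (inv_denseX inv) _ _ => //.
  by move: (inv_uniq inv); rewrite cat_uniq => /and3P [].
by move=> x xX; rewrite -mem_V1; apply: (inv_sub inv); rewrite mem_cat xX.
Qed.

Lemma LA_output_spec : let S := LA_output f c B ord tb tbm in
  [/\ cost c S <= B, f (setof (Xs st)) <= 3%:R * f S,
      f (setof (Ys st)) <= 3%:R * f S & forall x, f [set x] <= f S].
Proof.
have [cX hX] := chain_trunc main_loop_inv.
have [cY hY] := chain_trunc (loop_inv_sym main_loop_inv).
have [cS bX bY bE] := best_of_spec cX cY c_le_B (emax_scan_spec f tbm ord_uniq).
rewrite /LA_output LA_eval /=; split=> //.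
- by apply: le_trans hX _; rewrite ler_pM2l.
- by apply: le_trans hY _; rewrite ler_pM2l.
- by move=> x; apply: bE; rewrite (perm_mem ord_perm) mem_enum.
Qed.

End Analysis.

Theorem theorem1 :
  exists C : nat,
  forall (R : realFieldType) (T : finType) (f : {set T} -> R) (c : T -> R) (B : R)
         (ord : seq T) (tb : {set T} -> {set T} -> T -> bool) (tbm : T -> T -> bool),
    nonneg_fun f -> submodular f -> f set0 = 0 ->
    (forall e, 0 < c e) -> 0 < B -> (forall e, c e <= B) ->
    perm_eq ord (enum T) ->
    let S := LA_output f c B ord tb tbm in
    [/\ (LA_queries f c B ord tb tbm <= C * #|T| + C)%N,
        cost c S <= B &
        forall T' : {set T}, cost c T' <= B -> f T' <= 19%:R * f S].
Proof.
exists 3%N => R T f c B ord tb tbm f_nn f_sub f0 c_pos B_pos c_le_B ord_perm S.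
have [cS boundX boundY singletons] :=
  LA_output_spec tb tbm f_nn f_sub f0 c_pos B_pos c_le_B ord_perm.
split=> // [|O cO].
  by rewrite cardE -(perm_size ord_perm) LA_queries_bound.
have inv := main_loop_inv f B tb c_pos ord_perm.
apply: (chains_bound f_nn f_sub f0 c_pos B_pos (f_nn S) inv) => //.
by move=> x; rewrite (mem_V1 c B ord_perm).
Qed.
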